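(* $\mathrm{1N}\not\subseteq\mathrm{1DPD}$.
   Context: A family of promise decision problems over a fixed alphabet $\Sigma$ is $\mathcal{L}=\{(L^{(+)}_n,L^{(-)}_n)\}_{n\in\mathbb{N}}$ with $L^{(+)}_n,L^{(-)}_n\subseteq\Sigma^*$ disjoint; a family of machines $\{M_n\}_n$ solves it if each $M_n$ accepts every $x\in L^{(+)}_n$ and rejects every $x\in L^{(-)}_n$ (no uniformity is required). A 1dpda is a one-way deterministic pushdown automaton with state set $Q$, endmarked input, stack alphabet $\Gamma$ and push size $e$ (each move replaces the top stack symbol by a string in $\Gamma^{\le e}$), with accepting and rejecting halting states; its stack-state complexity is $|Q|+|\Gamma^{\le e}|$. $\mathrm{1DPD}$ is the class of families of promise problems solvable by families of 1dpda's whose stack-state complexity is bounded by a fixed polynomial in $n$. $\mathrm{1N}$ is the class of families of promise problems solvable by families of one-way nondeterministic finite automata whose number of states is bounded by a fixed polynomial in $n$. *)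

From mathcomp Require Import all_boot.
Set Implicit Arguments. Unset Strict Implicit. Unset Printing Implicit Defensive.

Inductive tsym (Sigma : Type) : Type :=
  | Cent : tsym Sigma
  | Dollar : tsym Sigma
  | Sym : Sigma -> tsym Sigma.
Arguments Cent {Sigma}. Arguments Dollar {Sigma}.

Definition tape (Sigma : Type) (x : seq Sigma) : seq (tsym Sigma) :=
  Cent :: map (@Sym Sigma) x ++ [:: Dollar].

(* A promise problem: (positive instances, negative instances). *)
Definition promise (Sigma : Type) := ((seq Sigma -> Prop) * (seq Sigma -> Prop))%type.

Definition promise_disjoint (Sigma : Type) (P : promise Sigma) : Prop :=
  forall x, P.1 x -> P.2 x -> False.

Record nfa (Sigma : Type) := Nfa {
  nfa_ns : nat;
  nfa_q0 : 'I_nfa_ns;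
  nfa_fin : pred 'I_nfa_ns;
  nfa_trans : 'I_nfa_ns -> tsym Sigma -> 'I_nfa_ns -> bool }.

Arguments nfa_trans {Sigma} n _ _ _ : rename.
Arguments nfa_fin {Sigma} n _ : rename.
Definition nfa_next (Sigma : Type) (M : nfa Sigma) (S : {set 'I_(nfa_ns M)})
  (a : tsym Sigma) : {set 'I_(nfa_ns M)} :=
  [set q' | [exists q in S, nfa_trans M q a q']].

Definition nfa_accepts (Sigma : Type) (M : nfa Sigma) (x : seq Sigma) : Prop :=
  exists2 q, q \in foldl (@nfa_next Sigma M) [set nfa_q0 M] (tape x) & nfa_fin M q.

Definition nfa_rejects (Sigma : Type) (M : nfa Sigma) (x : seq Sigma) : Prop :=
  ~ nfa_accepts M x.

(* states 'I_nq, stack alphabet 'I_ng, push size e; a transition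
   delta q (Some a) g  reads tape symbol a, delta q None g is a lambda-move;
   it replaces the top stack symbol g by a string of length <= e. *)
Record dpda (Sigma : Type) := Dpda {
  pd_nq : nat;
  pd_ng : nat;
  pd_e : nat;
  pd_q0 : 'I_pd_nq;
  pd_z0 : 'I_pd_ng;
  pd_acc : pred 'I_pd_nq;
  pd_rej : pred 'I_pd_nq;
  pd_delta : 'I_pd_nq -> option (tsym Sigma) -> 'I_pd_ng ->
             option ('I_pd_nq * seq 'I_pd_ng);
  pd_halt_disj : forall q, ~~ (pd_acc q && pd_rej q);
  pd_push : forall q a g q' w, pd_delta q a g = Some (q', w) -> size w <= pd_e;
  pd_det : forall q g, pd_delta q None g <> None ->
             forall a, pd_delta q (Some a) g = None }.

Arguments pd_delta {Sigma} d _ _ _ : rename.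
Arguments pd_acc {Sigma} d _ : rename.
Arguments pd_rej {Sigma} d _ : rename.

(* stack-state complexity |Q| + |Gamma^{<= e}| *)
Definition pd_ssc (Sigma : Type) (M : dpda Sigma) : nat :=
  pd_nq M + \sum_(i < (pd_e M).+1) pd_ng M ^ i.

Definition pd_config (Sigma : Type) (M : dpda Sigma) :=
  ('I_(pd_nq M) * seq (tsym Sigma) * seq 'I_(pd_ng M))%type.

Definition pd_step (Sigma : Type) (M : dpda Sigma) (c : pd_config M)
  : option (pd_config M) :=
  let: (q, t, s) := c in
  if pd_acc M q || pd_rej M q then None else
  match s with
  | [::] => None
  | g :: s' =>
    match pd_delta M q None g with
    | Some (q', w) => Some (q', t, w ++ s')
    | None =>
      match t with
      | [::] => None
      | a :: t' =>
        match pd_delta M q (Some a) g with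
        | Some (q', w) => Some (q', t', w ++ s')
        | None => None
        end
      end
    end
  end.

Fixpoint pd_run (Sigma : Type) (M : dpda Sigma) (k : nat) (c : pd_config M)
  : option (pd_config M) :=
  match k with
  | 0 => Some c
  | k'.+1 => match @pd_step Sigma M c with
             | Some c' => @pd_run Sigma M k' c'
             | None => None
             end
  end.

Definition pd_init (Sigma : Type) (M : dpda Sigma) (x : seq Sigma) : pd_config M :=
  (pd_q0 M, tape x, [:: pd_z0 M]).

Definition dpda_accepts (Sigma : Type) (M : dpda Sigma) (x : seq Sigma) : Prop :=
  exists k (c : pd_config M), @pd_run Sigma M k (pd_init M x) = Some c /\ pd_acc M c.1.1.

Definition dpda_rejects (Sigma : Type) (M : dpda Sigma) (x : seq Sigma) : Prop :=
  exists k (c : pd_config M), @pd_run Sigma M k (pd_init M x) = Some c /\ pd_rej M c.1.1.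

(* "bounded by a fixed polynomial in n" is rendered as  <= c * (n+1)^c. *)
Definition in_1N (Sigma : Type) (L : nat -> promise Sigma) : Prop :=
  exists (c : nat) (M : nat -> nfa Sigma),
    forall n, nfa_ns (M n) <= c * n.+1 ^ c /\
      (forall x, (L n).1 x -> nfa_accepts (M n) x) /\
      (forall x, (L n).2 x -> nfa_rejects (M n) x).

Definition in_1DPD (Sigma : Type) (L : nat -> promise Sigma) : Prop :=
  exists (c : nat) (M : nat -> dpda Sigma),
    forall n, pd_ssc (M n) <= c * n.+1 ^ c /\
      (forall x, (L n).1 x -> dpda_accepts (M n) x) /\
      (forall x, (L n).2 x -> dpda_rejects (M n) x).

(* The witness family asks to tell words that are not n-periodic (two letters
   at a distance divisible by n differ) from fourth powers w^4 with |w| = n.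
   An NFA with 2n + 2 states guesses the first letter of a mismatch and counts
   the distance mod n.
   A DPDA with stack-state complexity s must reject every w^4.  Follow the
   stack height along the rejecting run: either from some moment, after
   reading between n+2 and 3n+1 symbols, the stack never drops below its
   current top symbol, or some stretch of the run reading between n+1 and
   3n symbols never touches the stack below a level that lies at most e
   symbols under both of its endpoints.  In both cases a bounded
   "signature" (tape positions, states and the short stack tops at the cut
   points) suffices to replay the rest of the run on any input carrying a
   different window of letters.  Two different words w, w' with the same
   signature would thus yield a rejected splice of w^4 and w'^4, which is
   not n-periodic.  Hence 2^n <= #signatures = O(n^2 s^6), and s cannot be
   polynomial in n. *)

From mathcomp Require Import all_boot zify.
From Stdlib Require Import IndefiniteDescription.
Set Implicit Arguments. Unset Strict Implicit. Unset Printing Implicit Defensive.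

Section PushdownRuns.
Variables (Sigma : Type) (M : dpda Sigma).
Local Notation config := (pd_config M).
Local Notation run := (@pd_run Sigma M).
Local Notation step := (@pd_step Sigma M).

Lemma pd_runS k (c : config) : run k.+1 c = obind (run k) (step c).
Proof. by []. Qed.

Lemma pd_run_add k1 k2 (c : config) :
  run (k1 + k2) c = obind (run k2) (run k1 c).
Proof. by elim: k1 c => [|k1 IH] c //=; case: (step c). Qed.

Lemma pd_runSr k (c : config) : run k.+1 c = obind step (run k c).
Proof.
by rewrite -addn1 pd_run_add; case: (run k c) => //= c'; case: (step c').
Qed.

Lemma pd_step_cat q u s q' u' s' rest beta :
  step (q, u, s) = Some (q', u', s') ->
  step (q, u ++ rest, s ++ beta) = Some (q', u' ++ rest, s' ++ beta).
Proof.
rewrite /pd_step; case: (_ || _) => //; case: s => [|g s] //=.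
case: (pd_delta M q None g) => [[q1 w] [<- <- <-]|]; first by rewrite catA.
case: u => [|a u] //=.
by case: (pd_delta M q (Some a) g) => [[q1 w] [<- <- <-]|] //; rewrite catA.
Qed.

Lemma pd_run_cat k q u s q' u' s' rest beta :
  run k (q, u, s) = Some (q', u', s') ->
  run k (q, u ++ rest, s ++ beta) = Some (q', u' ++ rest, s' ++ beta).
Proof.
elim: k q u s => [|k IH] q u s; first by case=> <- <- <-.
rewrite !pd_runS; case E: (step (q, u, s)) => [[[q1 u1] s1]|] // /(IH _ _ _) H.
by rewrite (pd_step_cat rest beta E).
Qed.

Lemma pd_step_uncat q u s q' v s2 rest beta :
  step (q, u ++ rest, s ++ beta) = Some (q', v, s2) -> s != [::] ->
  size rest <= size v ->
  exists u' s', [/\ v = u' ++ rest, s2 = s' ++ beta &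
                   step (q, u, s) = Some (q', u', s')].
Proof.
rewrite /pd_step; case: (_ || _) => //; case: s => [|g s] //= + _.
case: (pd_delta M q None g) => [[q1 w] [<- <- <-] _|].
  by exists u, (w ++ s); rewrite catA.
case: u => [|a u] /=.
  case: rest => [|a r] //=.
  by case: (pd_delta M q (Some a) g) => [[q1 w] [_ <- _]|] //; rewrite ltnn.
case: (pd_delta M q (Some a) g) => [[q1 w] [<- <- <-] _|] //.
by exists u, (w ++ s); rewrite catA.
Qed.

Lemma pd_step_tape (c c' : config) :
  step c = Some c' -> exists2 i, i <= 1 & c'.1.2 = drop i c.1.2.
Proof.
case: c => [[q t] [|g s]]; rewrite /pd_step; case: (_ || _) => //=.
case: (pd_delta M q None g) => [[q1 w] [<-]|]; first by exists 0; rewrite ?drop0.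
case: t => [|a t] //=.
case: (pd_delta M q (Some a) g) => [[q1 w] [<-]|] //.
by exists 1; rewrite //= drop0.
Qed.

Lemma pd_step_stack q t s (c' : config) : step (q, t, s) = Some c' ->
  exists g s0 w, [/\ s = g :: s0, c'.2 = w ++ s0 & size w <= pd_e M].
Proof.
rewrite /pd_step; case: (_ || _) => //; case: s => [|g s] //=.
case E: (pd_delta M q None g) => [[q1 w]|].
  by case=> <-; exists g, s, w; split => //; apply: pd_push E.
case: t => [|a t] //=.
case E': (pd_delta M q (Some a) g) => [[q1 w]|] // [<-].
by exists g, s, w; split => //; apply: pd_push E'.
Qed.

Lemma pd_run_tape k (c c' : config) :
  run k c = Some c' -> exists i, c'.1.2 = drop i c.1.2.
Proof.
elim: k c => [|k IH] c; first by case=> <-; exists 0; rewrite drop0.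
rewrite pd_runS; case E: (step c) => [c1|] // /IH [i ->].
by have [j _ ->] := pd_step_tape E; exists (i + j); rewrite drop_drop.
Qed.

(* The converse of [pd_run_cat]: a run whose stack never drops to [beta]
   and which does not read into [rest] is a run on [u] and [s] alone. *)
Lemma pd_run_uncat k q u rest s beta (c : config) :
  run k (q, u ++ rest, s ++ beta) = Some c ->
  (forall i (c' : config), i < k -> run i (q, u ++ rest, s ++ beta) = Some c' ->
     size beta < size c'.2) ->
  size rest <= size c.1.2 ->
  exists u' s', c = (c.1.1, u' ++ rest, s' ++ beta) /\
                run k (q, u, s) = Some (c.1.1, u', s').
Proof.
elim: k q u s => [|k IH] q u s; first by case=> <- _ _; exists u, s.
rewrite pd_runS; case E: (step _) => [[[q1 v1] s1]|] // Hrun Habove Hrest.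
have s_nil : s != [::].
  by move: (Habove 0 _ (ltn0Sn k) erefl) => /=; case: (s) => //=; rewrite ltnn.
have Hv : size rest <= size v1.
  have [i Hi] := pd_run_tape Hrun.
  by apply: leq_trans Hrest _; rewrite Hi size_drop leq_subr.
have [u1 [s1' [Ev Es E1]]] := pd_step_uncat E s_nil Hv; subst v1 s1.
have [|u' [s' [Ec Hloc]]] := IH _ _ _ Hrun _ Hrest.
  by move=> i c' Hi Hc; apply: (Habove i.+1) => //; rewrite pd_runS E.
by exists u', s'; split => //; rewrite pd_runS E1.
Qed.

Lemma pd_run_halted k1 k2 (c c1 c2 : config) :
  run k1 c = Some c1 -> pd_acc M c1.1.1 || pd_rej M c1.1.1 ->
  run k2 c = Some c2 -> k1 <= k2 -> c2 = c1.
Proof.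
move=> H1 Hhalt H2 /subnKC Ek; move: H2; rewrite -Ek pd_run_add H1 /=.
case: (k2 - k1) => [[]|d] //=.
by move: Hhalt; case: c1 {H1} => [[q t] s] /= Hhalt; rewrite /pd_step Hhalt.
Qed.

Lemma pd_run_rej_acc k1 k2 (c c1 c2 : config) :
  run k1 c = Some c1 -> pd_rej M c1.1.1 ->
  run k2 c = Some c2 -> pd_acc M c2.1.1 -> False.
Proof.
move=> H1 R1 H2 A2.
have halt1 : pd_acc M c1.1.1 || pd_rej M c1.1.1 by rewrite R1 orbT.
have halt2 : pd_acc M c2.1.1 || pd_rej M c2.1.1 by rewrite A2.
have [/(pd_run_halted H1 halt1 H2)|/ltnW/(pd_run_halted H2 halt2 H1)] := leqP k1 k2;
  by move=> E; subst c2; have := pd_halt_disj c1.1.1; rewrite A2 R1.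
Qed.

Lemma pd_run_stack_nonempty k i (c c' c'' : config) :
  run k c = Some c' -> i < k -> run i c = Some c'' -> 0 < size c''.2.
Proof.
move=> Hk Hi Hc; move: Hk; rewrite -(subnKC (ltnW Hi)) pd_run_add Hc /=.
case: (k - i) (subn_gt0 i k) => [|d]; first by rewrite Hi.
by case: c'' {Hc} => [[q t] [|g s]] //= _; rewrite /pd_step; case: (_ || _).
Qed.

Lemma pd_run_swap_suffix k q u rest rest' s q' s' :
  run k (q, u ++ rest, s) = Some (q', rest, s') ->
  run k (q, u ++ rest', s) = Some (q', rest', s').
Proof.
move=> H.
have := @pd_run_uncat k q u rest s [::] (q', rest, s').
rewrite !cats0 => /(_ H) [].
- by move=> i c' Hi; apply: pd_run_stack_nonempty H Hi.
- by [].
move=> u1 [s1 [[Eu ->] Hloc]].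
have {}Eu : u1 = [::].
  by move: (congr1 size Eu); rewrite size_cat; case: (u1) => //= a l; lia.
subst u1; rewrite cats0 in Hloc.
by have := pd_run_cat rest' [::] Hloc; rewrite !cats0.
Qed.

(* Cut-and-paste: once the part [al] above [be] drives a computation on [v],
   the tape [drop a t] may be replaced by [v]. *)
Lemma pd_run_graft r k q t s a q1 al be v q2 v' ga :
  run r (q, t, s) = Some (q1, drop a t, al ++ be) ->
  run k (q1, v, al) = Some (q2, v', ga) ->
  run (r + k) (q, take a t ++ v, s) = Some (q2, v', ga ++ be).
Proof.
rewrite -{1}(cat_take_drop a t) => /(pd_run_swap_suffix v) H1 H2.
by rewrite pd_run_add H1 /=; have := pd_run_cat [::] be H2; rewrite !cats0.
Qed.

End PushdownRuns.

Lemma first_argmin (f : nat -> nat) lo hi : lo <= hi -> exists mu,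
  [/\ lo <= mu <= hi, forall x, lo <= x <= hi -> f mu <= f x
    & forall x, lo <= x < mu -> f mu < f x].
Proof.
elim: hi => [|hi IH] lohi.
  by exists 0; split=> [|x Hx|x Hx]; [lia | have -> : x = 0 by lia | lia].
have [lo_hi|hi_lo] := leqP lo hi; last first.
  by exists hi.+1; split=> [|x Hx|x Hx]; [lia | have -> : x = hi.+1 by lia | lia].
have [mu [Hmu Hmin Hfirst]] := IH lo_hi.
have [lt_new|ge_new] := ltnP (f hi.+1) (f mu).
  exists hi.+1; split=> [|x Hx|x Hx]; first lia.
    have [le_x|gt_x] := leqP x hi; first by have := Hmin x; lia.
    by have -> : x = hi.+1 by lia.
  by have := Hmin x; lia.
exists mu; split=> // [|x Hx]; first lia.
by have [le_x|gt_x] := leqP x hi; [apply: Hmin; lia | have -> : x = hi.+1 by lia].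
Qed.

Section StackProfile.
Variables (h P : nat -> nat) (T e n : nat).
Hypothesis h_pos : forall t, t < T -> 0 < h t.
Hypothesis h_up : forall t, t < T -> h t.+1 < h t + e.
Hypothesis h_down : forall t, t < T -> h t <= (h t.+1).+1.
Hypothesis P_step : forall t, t < T -> P t <= P t.+1 <= (P t).+1.
Hypothesis h0 : h 0 = 1.
Hypothesis P0 : P 0 = 0.
Hypothesis n_gt0 : 0 < n.

Definition shallow r t := forall x, r <= x <= t -> h r < h x + e /\ h t < h x + e.

Definition suffix_min rho := forall x, rho <= x < T -> h rho <= h x.

Lemma P_mono r t : r <= t -> t <= T -> P r <= P t.
Proof.
move=> rt tT; apply: (@homo_leq_in _ [pred x | x <= T] _ leq) => //=.
- exact: leq_trans.
- by move=> i j _ jT k /andP [_ /ltnW kj]; rewrite inE (leq_trans kj jT).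
- by move=> i _ iT; have /andP [] := P_step iT.
- by rewrite inE (leq_trans rt tT).
Qed.

Lemma shallow_narrow r t : r <= t -> t < T -> shallow r t -> n < P t - P r ->
  exists r' t', [/\ r' <= t' < T, shallow r' t' & n < P t' - P r' <= 3 * n].
Proof.
have [d] := ubnP (t - r); elim: d r t => // d IH r t Hd rt tT Hsh Hn.
have [small|big] := leqP (P t - P r) (3 * n); first by exists r, t; split=> //; lia.
have r_t : r < t by rewrite ltn_neqAle rt andbT; apply/eqP => E; subst t; lia.
have e_gt0 : 0 < e by have [] := Hsh r; lia.
have [mu [Hmu Hmin Hfirst]] := first_argmin h (ltnW r_t).
have [Pr Pt] : P r <= P mu /\ P mu <= P t by split; apply: P_mono; lia.
have [mu_r|mu_ne_r] := eqVneq mu r.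
  subst mu; apply: (IH r.+1 t) => //; try lia.
    move=> x Hx; split; last by have [] := Hsh x; lia.
    by have := h_up (ltn_trans r_t tT); have := Hmin x; lia.
  by have := P_step (ltn_trans r_t tT); lia.
have [mu_t|mu_ne_t] := eqVneq mu t.
  subst mu; have t1 : t.-1 < T by lia.
  have Et : (t.-1).+1 = t by lia.
  apply: (IH r t.-1); try lia.
    move=> x Hx; split; first by have [] := Hsh x; lia.
    by have := h_down t1; rewrite Et; have := Hfirst x; lia.
  by have := P_step t1; rewrite Et; lia.
have [left_big|left_small] := ltnP n (P mu - P r).
  apply: (IH r mu) => //; try lia.
  by move=> x Hx; split; [have [] := Hsh x | have := Hmin x]; lia.
apply: (IH mu t) => //; try lia.
by move=> x Hx; split; [have := Hmin x | have [] := Hsh x]; lia.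
Qed.

Lemma suffix_min_climb rho : rho <= T -> suffix_min rho -> P rho <= n.+1 ->
  n.+1 < P T ->
  (exists rho', [/\ rho' <= T, n.+1 < P rho' <= 3 * n + 1 & suffix_min rho']) \/
  (exists r t, [/\ r <= t < T, shallow r t & n < P t - P r <= 3 * n]).
Proof.
have [d] := ubnP (T - rho); elim: d rho => // d IH rho Hd rhoT rho_min Prho PT.
have [rho1T|T_rho1] := ltnP rho.+1 T; last first.
  have ET : T = rho.+1.
    by case: (eqVneq rho T) => [E|]; [rewrite E in Prho; lia | lia].
  left; exists T; split=> // [|x]; last lia.
  by have := @P_step rho; rewrite -ET; lia.
have rho1T' : rho.+1 <= T.-1 by lia.
have [mu [Hmu mu_argmin _]] := first_argmin h rho1T'.
have mu_min : suffix_min mu by move=> x Hx; apply: mu_argmin; lia.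
have [Pmu_small|Pmu_big] := leqP (P mu) n.+1; first by apply: (IH mu) => //; lia.
have [Pmu_mid|Pmu_far] := leqP (P mu) (3 * n + 1).
  by left; exists mu; split=> //; [lia | apply/andP].
right; have e_gt0 : 0 < e by have := h_up (ltnW rho1T); have := rho_min rho.+1; lia.
apply: (shallow_narrow (r := rho) (t := mu)); try lia.
  move=> x Hx; split; first by have := rho_min x; lia.
  have [->|x_ne] := eqVneq x rho.
    by have := h_up (ltnW rho1T); have := mu_argmin rho.+1; lia.
  by have := mu_argmin x; lia.
Qed.

Lemma stack_profile_cases : n.+1 < P T ->
  (exists rho, [/\ rho <= T, n.+1 < P rho <= 3 * n + 1 & suffix_min rho]) \/
  (exists r t, [/\ r <= t < T, shallow r t & n < P t - P r <= 3 * n]).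
Proof.
apply: (suffix_min_climb (rho := 0)); rewrite ?P0 //.
by move=> x Hx; rewrite h0; apply: h_pos; lia.
Qed.

End StackProfile.

Section RunTrace.
Variables (Sigma : Type) (M : dpda Sigma) (C0 cf : pd_config M) (T : nat).
Local Notation run := (@pd_run Sigma M).
Hypothesis run_T : run T C0 = Some cf.

Definition conf t := odflt C0 (run t C0).
Definition height t := size (conf t).2.
Definition pos t := size C0.1.2 - size (conf t).1.2.

Lemma conf_run t : t <= T -> run t C0 = Some (conf t).
Proof.
by move=> /subnKC ET; move: run_T; rewrite -ET pd_run_add /conf; case: (run t C0).
Qed.

Lemma conf_T : conf T = cf.
Proof. by have := conf_run (leqnn T); rewrite run_T => -[]. Qed.

Lemma conf_segment r t : r <= t -> t <= T -> run (t - r) (conf r) = Some (conf t).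
Proof.
move=> rt tT; have := conf_run tT.
by rewrite -{1}(subnKC rt) pd_run_add (conf_run (leq_trans rt tT)).
Qed.

Lemma conf_segmentP r i c : r + i <= T -> run i (conf r) = Some c -> c = conf (r + i).
Proof.
move=> riT Hc; have := conf_run riT.
by rewrite pd_run_add (conf_run (leq_trans (leq_addr i r) riT)) /= Hc => -[].
Qed.

Lemma conf_step t : t < T -> pd_step (conf t) = Some (conf t.+1).
Proof. by move=> tT; have := conf_run tT; rewrite pd_runSr (conf_run (ltnW tT)). Qed.

Lemma conf_stack t : t < T -> exists g s0 w,
  [/\ (conf t).2 = g :: s0, (conf t.+1).2 = w ++ s0 & size w <= pd_e M].
Proof.
by move=> /conf_step; case: (conf t) => [[q u] s] /pd_step_stack.
Qed.

Lemma height_pos t : t < T -> 0 < height t.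
Proof. by move=> /conf_stack [g [s0 [w [Es _ _]]]]; rewrite /height Es. Qed.

Lemma height_up t : t < T -> height t.+1 < height t + pd_e M.
Proof.
by move=> /conf_stack [g [s0 [w [Es Es' Hw]]]]; rewrite /height Es Es' size_cat /=; lia.
Qed.

Lemma height_down t : t < T -> height t <= (height t.+1).+1.
Proof.
by move=> /conf_stack [g [s0 [w [Es Es' Hw]]]]; rewrite /height Es Es' size_cat /=; lia.
Qed.

Lemma conf_tape t : t <= T -> (conf t).1.2 = drop (pos t) C0.1.2.
Proof.
move=> /conf_run /pd_run_tape [i Ei]; rewrite /pos Ei size_drop.
by case: (leqP i (size C0.1.2)) => Hi; [rewrite subKn | rewrite !drop_oversize //; lia].
Qed.

Lemma pos_step t : t < T -> pos t <= pos t.+1 <= (pos t).+1.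
Proof.
move=> tT; have [j Hj Ej] := pd_step_tape (conf_step tT).
rewrite /pos Ej (conf_tape (ltnW tT)) !size_drop; lia.
Qed.

Lemma pos0 : pos 0 = 0.
Proof. exact: subnn. Qed.

Lemma pos_le_time t : t <= T -> pos t <= t.
Proof.
elim: t => [|t IH] tT; first by rewrite pos0.
by have := pos_step tT; have := IH (ltnW tT); lia.
Qed.

(* If the stack stays above its bottom [L] symbols during [r, t), these
   symbols are untouched, and the part above them drives the computation on
   the input read in between. *)
Lemma conf_split r t L : r <= t -> t <= T -> L <= height r ->
  (forall x, r <= x < t -> L < height x) ->
  exists al ga be, [/\ conf r = ((conf r).1.1, drop (pos r) C0.1.2, al ++ be),
    conf t = ((conf t).1.1, drop (pos t) C0.1.2, ga ++ be), size be = L &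
    run (t - r) ((conf r).1.1, take (pos t - pos r) (drop (pos r) C0.1.2), al)
      = Some ((conf t).1.1, [::], ga)].
Proof.
move=> rt tT Lr above.
have pos_rt : pos r <= pos t := P_mono pos_step rt tT.
set u := take (pos t - pos r) (drop (pos r) C0.1.2).
have Et : (conf t).1.2 = drop (pos t - pos r) (drop (pos r) C0.1.2).
  by rewrite conf_tape // drop_drop subnK.
have Er : conf r = ((conf r).1.1, u ++ (conf t).1.2, (conf r).2).
  by rewrite Et cat_take_drop -conf_tape ?(leq_trans rt tT) //; case: (conf r) => [[]].
set al := take (height r - L) (conf r).2; set be := drop (height r - L) (conf r).2.
have Ebe : size be = L by rewrite size_drop -/(height r); lia.
have Hseg := conf_segment rt tT.
rewrite Er -(cat_take_drop (height r - L) (conf r).2) in Hseg.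
have above_be i c' : i < t - r ->
    run i ((conf r).1.1, u ++ (conf t).1.2, al ++ be) = Some c' -> size be < size c'.2.
  move=> ir; have riT : r + i <= T by lia.
  rewrite cat_take_drop -Er => /(conf_segmentP riT) ->.
  by rewrite Ebe; apply: above; lia.
have [u' [s' [Ec Hrun]]] := pd_run_uncat Hseg above_be (leqnn _).
have {}Ec : conf t = ((conf t).1.1, (conf t).1.2, s' ++ be) /\ u' = [::].
  move: Ec; case: (conf t) => [[q v] s] /= [Ev ->]; split => //.
  by move: (congr1 size Ev); rewrite size_cat; case: (u') => //= ? ?; lia.
case: Ec => Ec Eu'; subst u'.
exists al, s', be; split=> //.
- by rewrite {1}Er Et !cat_take_drop.
- by rewrite {1}Ec conf_tape.
Qed.

End RunTrace.

Definition rep4 (w : seq bool) : seq bool := flatten (nseq 4 w).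

Definition not_periodic n (x : seq bool) : Prop :=
  exists i j, [/\ i < j, j < size x, n %| j - i & nth false x i != nth false x j].

Definition fourth_power n (x : seq bool) : Prop := exists w, size w = n /\ x = rep4 w.

Definition period_promise n : promise bool := (not_periodic n, fourth_power n).

Lemma size_rep4 w : size (rep4 w) = 4 * size w.
Proof. by rewrite /rep4 /= cats0 !size_cat; lia. Qed.

Lemma nth_rep4 w d : d < 4 * size w -> nth false (rep4 w) d = nth false w (d %% size w).
Proof.
rewrite /rep4; elim: 4 d => [|k IH] d; first by rewrite mul0n.
rewrite mulSn /= nth_cat; case: (ltnP d (size w)) => [dw _|wd dk].
  by rewrite modn_small.
rewrite IH; last lia.
by rewrite -{2}(subnK wd) modnDr.
Qed.

Lemma nth_rep4_mod w i j : i < 4 * size w -> j < 4 * size w ->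
  i = j %[mod size w] -> nth false (rep4 w) i = nth false (rep4 w) j.
Proof. by move=> iw jw Eij; rewrite !nth_rep4 // Eij. Qed.

Lemma period_promise_disjoint n : promise_disjoint (period_promise n).
Proof.
move=> x [i [j [ij jx n_ji]]] + [w [Hw Ex]]; subst x n; rewrite size_rep4 in jx.
rewrite (nth_rep4_mod (ltn_trans ij jx) jx) ?eqxx //.
by apply/eqP; rewrite eq_sym eqn_mod_dvd // ltnW.
Qed.

(* Letter [d] of [x] sits at position [d.+1] of [tape x]; [splice x x' a b]
   takes the letters at tape positions [a <= p < b] from [x'], the rest from [x]. *)
Definition splice (x x' : seq bool) a b :=
  mkseq (fun d => nth false (if a <= d.+1 < b then x' else x) d) (size x).

Lemma nth_tape (x : seq bool) i : nth Dollar (tape x) i =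
  if i == 0 then Cent else if i <= size x then Sym (nth false x i.-1) else Dollar.
Proof.
case: i => [|i] //=; rewrite nth_cat size_map.
case: (ltnP i (size x)) => H; first by rewrite (nth_map false).
by case: (i - size x) => [|m] //=; rewrite nth_nil.
Qed.

Lemma size_tape (x : seq bool) : size (tape x) = (size x).+2.
Proof. by rewrite /tape /= size_cat size_map addn1. Qed.

Lemma nth_splice_seq (A : Type) (X Y : seq A) (x0 : A) a b i :
  size X = size Y -> a <= b -> b <= size X ->
  nth x0 (take a X ++ take (b - a) (drop a Y) ++ drop b X) i =
  nth x0 (if a <= i < b then Y else X) i.
Proof.
move=> XY ab bX; rewrite nth_cat size_takel; last lia.
case: (ltnP i a) => [ia|ai]; first by rewrite nth_take // ifN //; lia.
rewrite nth_cat size_takel ?size_drop; last lia.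
case: (ltnP (i - a) (b - a)) => [iab|abi].
  by rewrite nth_take // nth_drop subnKC // ifT //; lia.
rewrite nth_drop ifN; last lia.
by congr nth; lia.
Qed.

Lemma tape_splice (x x' : seq bool) a b :
  size x = size x' -> a <= b -> b <= (size x).+2 ->
  take a (tape x) ++ take (b - a) (drop a (tape x')) ++ drop b (tape x) =
  tape (splice x x' a b).
Proof.
move=> xx' ab bx; apply: (@eq_from_nth _ Dollar).
  rewrite !size_cat !size_drop !size_takel ?size_drop ?size_tape ?size_mkseq -?xx';
  lia.
move=> i _; rewrite nth_splice_seq ?size_tape -?xx' //.
have [->|i0] := eqVneq i 0; first by case: ifP.
case: ifP => inside; rewrite !nth_tape size_mkseq -?xx' (negbTE i0);
  case: leqP => // ix; rewrite nth_mkseq ?prednK ?lt0n ?inside //; lia.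
Qed.

Lemma nth_neq_exists (T : eqType) (x0 : T) (s1 s2 : seq T) :
  size s1 = size s2 -> s1 != s2 ->
  exists2 i, i < size s1 & nth x0 s1 i != nth x0 s2 i.
Proof.
move=> Hs ne.
have /hasP [i] : has (fun i => nth x0 s1 i != nth x0 s2 i) (iota 0 (size s1)).
  apply: contraNT ne => /hasPn same; apply/eqP/(eq_from_nth Hs) => i lt_i.
  by apply/eqP/negPn/same; rewrite mem_iota.
by rewrite mem_iota => /andP [_ lt_i] ne_i; exists i.
Qed.

Lemma not_periodicP n (y : seq bool) i j : i < size y -> j < size y ->
  i = j %[mod n] -> nth false y i != nth false y j -> not_periodic n y.
Proof.
wlog ij : i j / i <= j => [wlog_ij|iy jy eq_ij ne_ij].
  case: (leqP i j) => [ij|ji]; first exact: wlog_ij.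
  by move=> iy jy eq_ij ne_ij; apply: (wlog_ij j i); rewrite 1?eq_sym ?(ltnW ji).
exists i, j; split=> //; last by rewrite -eqn_mod_dvd // eq_ij.
by rewrite ltn_neqAle ij andbT; apply: contraNneq ne_ij => ->.
Qed.

Lemma residue_in_range n lo k : 0 < n -> k < n ->
  exists2 d, lo <= d < lo + n & d %% n = k.
Proof.
move=> n_gt0 kn; have := divn_eq lo n; have := ltn_pmod lo n_gt0.
set q := lo %/ n; set m := lo %% n => mn Elo.
have [mk|km] := leqP m k.
  by exists (q * n + k); [lia | rewrite modnMDl modn_small].
by exists (q.+1 * n + k); [rewrite mulSn; lia | rewrite modnMDl modn_small].
Qed.

Lemma residue_window n a b k : 0 < n -> n < b - a <= 3 * n -> b <= 4 * n + 2 ->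
  k < n -> exists d1 d2, [/\ d1 < 4 * n, d2 < 4 * n, d1 = k %[mod n], d2 = k %[mod n]
    & (a <= d1.+1 < b) && ~~ (a <= d2.+1 < b)].
Proof.
move=> n_gt0 ab b4n kn.
have [d1 Hd1 Rd1] := residue_in_range a.-1 n_gt0 kn.
have Rk : 3 * n + k = k %[mod n] by rewrite modnMDl.
have [k_in|k_out] := boolP (a <= k.+1 < b).
  by exists d1, (3 * n + k); rewrite Rd1 Rk (modn_small kn); split=> //; lia.
by exists d1, k; rewrite Rd1 (modn_small kn); split=> //; lia.
Qed.

Lemma splice_not_periodic n (w w' : seq bool) a b :
  size w = n -> size w' = n -> w != w' ->
  n < b - a <= 3 * n -> b <= 4 * n + 2 ->
  not_periodic n (splice (rep4 w) (rep4 w') a b).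
Proof.
move=> wn w'n ne_ww' ab b4n; have n_gt0 : 0 < n by lia.
have [k] := nth_neq_exists false (etrans wn (esym w'n)) ne_ww'; rewrite wn => kn ne_k.
have [d1 [d2 [d1n d2n R1 R2 /andP [in1 out2]]]] := residue_window n_gt0 ab b4n kn.
have size_y : size (splice (rep4 w) (rep4 w') a b) = 4 * n.
  by rewrite size_mkseq size_rep4 wn.
apply: (not_periodicP (i := d1) (j := d2)); rewrite ?size_y ?R1 ?R2 //.
rewrite !nth_mkseq ?size_rep4 ?wn // in1 (negbTE out2).
by rewrite !nth_rep4 ?wn ?w'n // R1 R2 modn_small // eq_sym.
Qed.

Lemma leq_card_rel (A B : finType) (R : A -> B -> Prop) :
  (forall a, exists b, R a b) -> (forall a a' b, R a b -> R a' b -> a = a') ->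
  #|A| <= #|B|.
Proof.
move=> R_total R_inj.
pose f a := proj1_sig (constructive_indefinite_description _ (R_total a)).
have Rf a : R a (f a) := proj2_sig (constructive_indefinite_description _ (R_total a)).
by apply: (leq_card f) => a a' Eaa'; apply: (R_inj _ _ _ (Rf a)); rewrite Eaa'.
Qed.

Section Signatures.
Variables (n : nat) (M : dpda bool).
Hypothesis n_gt0 : 0 < n.
Hypothesis M_acc : forall x, not_periodic n x -> dpda_accepts M x.
Hypothesis M_rej : forall x, fourth_power n x -> dpda_rejects M x.
Local Notation run := (@pd_run bool M).
Local Notation e := (pd_e M).
Local Notation stack := (seq 'I_(pd_ng M)).
Local Notation X w := (tape (rep4 w)).

Lemma no_rejecting_run y k (c : pd_config M) :
  run k (pd_init M y) = Some c -> pd_rej M c.1.1 -> not_periodic n y -> False.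
Proof.
by move=> Hc rej /M_acc [k' [c' [Hc' acc]]]; apply: pd_run_rej_acc Hc rej Hc' acc.
Qed.

Lemma size_X w : size w = n -> size (X w) = 4 * n + 2.
Proof. by move=> wn; rewrite size_tape size_rep4 wn addn2. Qed.

Definition segment_cut w a b q1 q2 (al ga : stack) : Prop :=
  exists r k1 k2 be (cf : pd_config M),
   [/\ run r (pd_init M (rep4 w)) = Some (q1, drop a (X w), al ++ be),
       run k1 (q1, take (b - a) (drop a (X w)), al) = Some (q2, [::], ga),
       run k2 (q2, drop b (X w), ga ++ be) = Some cf & pd_rej M cf.1.1].

Definition suffix_cut w a q1 (al : stack) : Prop :=
  exists r k be (cf : pd_config M),
   [/\ run r (pd_init M (rep4 w)) = Some (q1, drop a (X w), al ++ be),
       run k (q1, drop a (X w), al) = Some cf & pd_rej M cf.1.1].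

Lemma segment_cut_inj w w' a b q1 q2 al ga :
  size w = n -> size w' = n -> n < b - a <= 3 * n -> b <= 4 * n + 2 ->
  segment_cut w a b q1 q2 al ga -> segment_cut w' a b q1 q2 al ga -> w = w'.
Proof.
move=> wn w'n ab b4n [r [k1 [k2 [be [cf [H1 _ H3 rej]]]]]].
move=> [_ [k1' [_ [_ [_ [_ H2' _ _]]]]]].
case: (eqVneq w w') => // ne; exfalso.
have := pd_run_cat (drop b (X w)) [::] H2'; rewrite !cats0 => H2.
apply: (@no_rejecting_run (splice (rep4 w) (rep4 w') a b) (r + k1' + k2) _ _ rej).
  rewrite /pd_init -tape_splice ?size_rep4 ?wn ?w'n //; try lia.
  by rewrite pd_run_add (pd_run_graft H1 H2) /= H3.
exact: splice_not_periodic.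
Qed.

Lemma suffix_cut_inj w w' a q1 al :
  size w = n -> size w' = n -> n.+1 < a <= 3 * n + 1 ->
  suffix_cut w a q1 al -> suffix_cut w' a q1 al -> w = w'.
Proof.
move=> wn w'n a_n [r [k [be [cf [H1 _ _]]]]] [_ [k' [_ [[[q v] s] [_ H2' rej']]]]].
case: (eqVneq w w') => // ne; exfalso.
apply: (@no_rejecting_run (splice (rep4 w) (rep4 w') a (4 * n + 2)) (r + k')
          (q, v, s ++ be) _ rej').
  have E : tape (splice (rep4 w) (rep4 w') a (4 * n + 2)) =
           take a (X w) ++ drop a (X w').
    rewrite -tape_splice ?size_rep4 ?wn ?w'n //; try lia.
    rewrite [drop (4 * n + 2) _]drop_oversize ?size_X // cats0.
    by rewrite [take (4 * n + 2 - a) _]take_oversize // size_drop size_X.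
  by rewrite /pd_init E (pd_run_graft H1 H2').
by apply: splice_not_periodic => //; lia.
Qed.

(* Stack words of length at most [e], encoded as a length and a padded tuple. *)
Definition short_word := ('I_e.+1 * e.-tuple 'I_(pd_ng M))%type.

Definition word_of (g : short_word) : stack := take g.1 g.2.

Lemma word_ofP (al : stack) : size al <= e -> exists g, word_of g = al.
Proof.
move=> al_e; have pad : size (take e (al ++ nseq e (pd_z0 M))) == e.
  by rewrite size_takel // size_cat size_nseq leq_addl.
exists (Ordinal (al_e : size al < e.+1), Tuple pad).
by rewrite /word_of /= take_takel // take_size_cat.
Qed.

Definition signature := (('I_(4 * n + 3) * 'I_(4 * n + 3) * 'I_(pd_nq M) * 'I_(pd_nq M)
  * short_word * short_word) + ('I_(4 * n + 3) * 'I_(pd_nq M) * short_word))%type.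

Definition realizes w (s : signature) : Prop :=
  match s with
  | inl (a, b, q1, q2, g1, g2) =>
      n < b - a <= 3 * n /\ segment_cut w a b q1 q2 (word_of g1) (word_of g2)
  | inr (a, q1, g) => n.+1 < a <= 3 * n + 1 /\ suffix_cut w a q1 (word_of g)
  end.

Lemma realizes_inj w w' s : size w = n -> size w' = n ->
  realizes w s -> realizes w' s -> w = w'.
Proof.
move=> wn w'n; case: s => [[[[[[a b] q1] q2] g1] g2]|[[a q1] g]] /= [ab cut] [_ cut'].
  by apply: segment_cut_inj cut cut' => //; have := ltn_ord b; lia.
exact: suffix_cut_inj cut cut'.
Qed.

Section RejectingRun.
Variables (w : seq bool) (T : nat) (cf : pd_config M).
Hypothesis wn : size w = n.
Hypothesis run_T : run T (pd_init M (rep4 w)) = Some cf.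
Hypothesis rej_cf : pd_rej M cf.1.1.
Local Notation C0 := (pd_init M (rep4 w)).
Local Notation conf := (conf C0).
Local Notation height := (height C0).
Local Notation pos := (pos C0).

Lemma reads_far : n.+1 < pos T.
Proof.
rewrite ltnNge; apply/negP => pos_T.
pose w' := map negb w; pose y := splice (rep4 w) (rep4 w') (3 * n + 1) (4 * n + 2).
have ne : w != w'.
  apply/eqP => /(congr1 (nth false ^~ 0)); rewrite /w' (nth_map false) ?wn //.
  by case: (nth false w 0).
have w'n : size w' = n by rewrite size_map.
(* The run halts before reaching the spliced window. *)
have Ey : take (pos T) (tape y) = take (pos T) (X w).
  rewrite -tape_splice ?size_rep4 ?wn ?w'n //; try lia.
  rewrite takel_cat ?take_takel //; first lia.
  by rewrite size_takel ?size_X //; lia.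
have Ecf : cf = (cf.1.1, drop (pos T) (X w), cf.2).
  by rewrite -(conf_T run_T) -(conf_tape run_T (leqnn T)); case: (conf T) => [[]].
have := run_T; rewrite /pd_init Ecf -{1}(cat_take_drop (pos T) (X w)).
move=> /(pd_run_swap_suffix (drop (pos T) (tape y))); rewrite -Ey cat_take_drop => Hy.
by apply: (no_rejecting_run Hy rej_cf); apply: splice_not_periodic => //; lia.
Qed.

Lemma height0 : height 0 = 1.
Proof. by []. Qed.

Lemma e_gt0 : 0 < e.
Proof.
have T2 : 1 < T by have := reads_far; have := pos_le_time run_T (leqnn T); lia.
by have := height_up run_T (ltnW T2); have := height_pos run_T T2; rewrite height0; lia.
Qed.

Lemma suffix_signature rho : rho <= T -> n.+1 < pos rho <= 3 * n + 1 ->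
  suffix_min height T rho -> exists s, realizes w s.
Proof.
move=> rhoT Prho rho_min.
have above x : rho <= x < T -> (height rho).-1 < height x.
  move=> Hx; have xT : x < T by lia.
  by have := rho_min x Hx; have := height_pos run_T xT; lia.
have [al [ga [be [Er Et Ebe Hrun]]]] :=
  conf_split run_T rhoT (leqnn T) (leq_pred _) above.
have al_e : size al <= e.
  have := congr1 (fun c => size c.2) Er; rewrite /= size_cat Ebe -/(height rho).
  by have := e_gt0; lia.
have [g Eg] := word_ofP al_e.
have a_lt : pos rho < 4 * n + 3 by lia.
exists (inr (Ordinal a_lt, (conf rho).1.1, g)); rewrite /= Eg; split=> //.
exists rho, (T - rho), be, ((conf T).1.1, drop (pos T) (X w), ga); split.
- by rewrite -Er; exact: (conf_run run_T rhoT).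
- have := pd_run_cat (drop (pos T) (X w)) [::] Hrun; rewrite !cats0 /=.
  have Prho_T : pos rho <= pos T := P_mono (pos_step run_T) rhoT (leqnn T).
  have -> // : take (pos T - pos rho) (drop (pos rho) (X w)) ++ drop (pos T) (X w)
    = drop (pos rho) (X w) by rewrite -{2}(subnK Prho_T) -drop_drop cat_take_drop.
- by rewrite (conf_T run_T).
Qed.

Lemma segment_signature r t : r <= t < T -> shallow height e r t ->
  n < pos t - pos r <= 3 * n -> exists s, realizes w s.
Proof.
move=> /andP [rt tT] rt_shallow Prt.
have [mu [Hmu mu_min _]] := first_argmin height rt.
have muT : mu < T by lia.
have mu_pos := height_pos run_T muT.
have Lr : (height mu).-1 <= height r by have := mu_min r; lia.
have above x : r <= x < t -> (height mu).-1 < height x by have := mu_min x; lia.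
have [al [ga [be [Er Et Ebe Hrun]]]] := conf_split run_T rt (ltnW tT) Lr above.
have [hr ht] := rt_shallow mu Hmu.
have al_e : size al <= e.
  by have := congr1 (fun c => size c.2) Er; rewrite /= size_cat Ebe -/(height r); lia.
have ga_e : size ga <= e.
  by have := congr1 (fun c => size c.2) Et; rewrite /= size_cat Ebe -/(height t); lia.
have [g1 Eg1] := word_ofP al_e; have [g2 Eg2] := word_ofP ga_e.
have b_le : pos t <= 4 * n + 2 by rewrite -(size_X wn); apply: leq_subr.
have a_lt : pos r < 4 * n + 3 by lia.
have b_lt : pos t < 4 * n + 3 by lia.
exists (inl (Ordinal a_lt, Ordinal b_lt, (conf r).1.1, (conf t).1.1, g1, g2)).
rewrite /= Eg1 Eg2; split=> //.
exists r, (t - r), (T - t), be, cf; split=> //.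
- by rewrite -Er; exact: (conf_run run_T (leq_trans rt (ltnW tT))).
- by rewrite -Et -(conf_T run_T); exact: (conf_segment run_T (ltnW tT) (leqnn T)).
Qed.

Lemma exists_signature : exists s, realizes w s.
Proof.
have [[rho [rhoT Prho rho_min]]|[r [t [rtT rt_shallow Prt]]]] :=
  stack_profile_cases (height_pos run_T) (height_up run_T) (height_down run_T)
    (pos_step run_T) height0 (pos0 _) n_gt0 reads_far.
- exact: suffix_signature rho_min.
- exact: segment_signature rt_shallow Prt.
Qed.

End RejectingRun.

Lemma card_signature : #|{: signature}| <= 2 * (4 * n + 3) ^ 2 * pd_ssc M ^ 6.
Proof.
rewrite card_sum !card_prod card_tuple !card_ord.
set N := 4 * n + 3; set S := pd_ssc M.
have ng_gt0 : 0 < pd_ng M by case: (pd_z0 M) => z /=; case: (pd_ng M).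
have nq_S : pd_nq M <= S by apply: leq_addr.
have sum_S : \sum_(i < e.+1) pd_ng M ^ i <= S by apply: leq_addl.
have e_S : e.+1 <= S.
  apply: leq_trans sum_S; rewrite -{1}(card_ord e.+1) -sum1_card.
  by apply: leq_sum => i _; rewrite expn_gt0 ng_gt0.
have ng_S : pd_ng M ^ e <= S by apply: leq_trans sum_S; rewrite big_ord_recr leq_addl.
have word_S : e.+1 * pd_ng M ^ e <= S ^ 2 by apply: leq_mul.
have S_gt0 : 0 < S by apply: leq_trans e_S.
set G := e.+1 * pd_ng M ^ e.
have big : N * N * pd_nq M * pd_nq M * G * G <= N ^ 2 * S ^ 6.
  have -> : N ^ 2 * S ^ 6 = N * N * S * S * S ^ 2 * S ^ 2 by lia.
  by repeat apply: leq_mul.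
have small : N * pd_nq M * G <= N * N * pd_nq M * pd_nq M * G * G.
  have nq_gt0 : 0 < pd_nq M by case: (pd_q0 M) => q /=; case: (pd_nq M).
  have G_gt0 : 0 < G by rewrite muln_gt0 expn_gt0 ng_gt0.
  have -> : N * N * pd_nq M * pd_nq M * G * G =
            (N * pd_nq M * G) * (N * pd_nq M * G) by lia.
  by rewrite leq_pmulr // muln_gt0 G_gt0 muln_gt0 nq_gt0 !andbT /N addn3.
lia.
Qed.

Lemma dpda_ssc_lower_bound : 2 ^ n <= 2 * (4 * n + 3) ^ 2 * pd_ssc M ^ 6.
Proof.
apply: leq_trans card_signature.
have -> : 2 ^ n = #|{: n.-tuple bool}| by rewrite card_tuple card_bool.
apply: (@leq_card_rel _ _ (fun (w : n.-tuple bool) s => realizes w s)).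
  move=> w; have [T [cf [run_T rej]]] :=
    M_rej (ex_intro _ (val w) (conj (size_tuple w) erefl)).
  exact: exists_signature (size_tuple w) run_T rej.
move=> w w' s Hw Hw'.
by apply: val_inj; apply: realizes_inj Hw Hw'; rewrite size_tuple.
Qed.

End Signatures.

Section PeriodNFA.
Variable n : nat.

(* State [0] waits, state [1] accepts, and [mem_state c b] remembers a guessed
   letter [b] together with the number [c] of letters read since, mod [n]. *)
Definition mem_state c (b : bool) := (b + c.*2).+2.
Definition counter q := q.-2./2.
Definition bit q := odd q.

Lemma counter_mem c b : counter (mem_state c b) = c.
Proof. exact: half_bit_double. Qed.

Lemma bit_mem c b : bit (mem_state c b) = b.
Proof. by rewrite /bit /= negbK oddD odd_double addbF oddb. Qed.

Definition period_step (q : nat) (a : tsym bool) (q' : nat) : bool :=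
  match a with
  | Cent => (q == 0) && (q' == 0)
  | Dollar => (q == 1) && (q' == 1)
  | Sym s =>
      if q == 0 then (q' == 0) || (q' == mem_state 0 s)
      else if q == 1 then q' == 1
      else (q' == mem_state ((counter q).+1 %% n) (bit q))
           || [&& (counter q).+1 %% n == 0, s != bit q & q' == 1]
  end.

Lemma period_step_mem c b s q' : period_step (mem_state c b) (Sym s) q' =
  (q' == mem_state (c.+1 %% n) b) || [&& c.+1 %% n == 0, s != b & q' == 1].
Proof. by rewrite /period_step counter_mem bit_mem. Qed.

Definition period_nfa : nfa bool :=
  @Nfa bool (n + n).+2 ord0 (fun q => q == 1 :> nat) (fun q a q' => period_step q a q').

Local Notation state := 'I_(n + n).+2.
Local Notation next := (@nfa_next bool period_nfa).

Lemma in_next (S : {set state}) (q q' : state) a :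
  q \in S -> period_step q a q' -> q' \in next S a.
Proof. by move=> Sq step; rewrite inE; apply/existsP; exists q; rewrite Sq. Qed.

Lemma in_nextP (S : {set state}) a (q' : state) :
  q' \in next S a -> exists2 q, q \in S & period_step q a q'.
Proof. by rewrite inE => /existsP [q /andP [Sq step]]; exists q. Qed.

Definition after (x : seq bool) l :=
  foldl next (next [set ord0] Cent) (map (@Sym bool) (take l x)).

Lemma afterS x l : l < size x -> after x l.+1 = next (after x l) (Sym (nth false x l)).
Proof. by move=> lx; rewrite /after (take_nth false lx) map_rcons foldl_rcons. Qed.

Lemma nfa_acceptsE x : nfa_accepts period_nfa x <->
  exists2 q, q \in next (after x (size x)) Dollar & q == 1 :> nat.
Proof. by rewrite /nfa_accepts /after take_size /tape /= foldl_cat. Qed.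

Lemma after_loop (q : state) x l l' :
  (forall s, period_step q (Sym s) q) -> l <= l' <= size x ->
  q \in after x l -> q \in after x l'.
Proof.
move=> loop /andP [ll' l'x].
elim: l' ll' l'x => [|l' IH]; first by rewrite leqn0 => /eqP ->.
rewrite leq_eqVlt ltnS => /orP [/eqP <- //|ll'] l'x Hq.
by rewrite afterS //; apply: in_next (IH ll' (ltnW l'x) Hq) (loop _).
Qed.

Lemma modn_succ m : (m %% n).+1 %% n = m.+1 %% n.
Proof. by rewrite -addn1 modnDml addn1. Qed.

Lemma mem_stateK c b : c < n -> (inord (mem_state c b) : state) = mem_state c b :> nat.
Proof. by move=> cn; rewrite inordK // /mem_state -addnn; case: b; lia. Qed.

Lemma wait_in x l : l <= size x -> ord0 \in after x l.
Proof.
move=> lx; apply: (@after_loop _ _ 0) => //.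
by rewrite /after take0; apply: (in_next (q := ord0)); rewrite ?inE.
Qed.

Lemma period_nfa_accepts x : not_periodic n x -> nfa_accepts period_nfa x.
Proof.
move=> [i [j [ij jx n_ji ne]]].
have n_gt0 : 0 < n by move: n_ji; case: (n) => //; rewrite dvd0n subn_eq0 leqNgt ij.
pose track l : state := inord (mem_state ((l - i.+1) %% n) (nth false x i)).
have trackK l : track l = mem_state ((l - i.+1) %% n) (nth false x i) :> nat.
  by rewrite mem_stateK ?ltn_pmod.
have track_in l : i < l <= j -> track l \in after x l.
  elim: l => [//|l IH] /andP [il lj]; rewrite afterS; last lia.
  have [li|ltil] := eqVneq l i.
    subst l; apply: (in_next (wait_in (ltnW (ltn_trans ij jx)))).
    by rewrite /= trackK subnn mod0n eqxx orbT.
  have il' : i < l by lia.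
  apply: (in_next (IH _)); first lia.
  by rewrite !trackK period_step_mem modn_succ -subSn // eqxx.
have one_in : (inord 1 : state) \in after x j.+1.
  rewrite afterS //; apply: (in_next (track_in j _)); first lia.
  rewrite trackK period_step_mem modn_succ -subSn // subSS (eqP n_ji) inordK //.
  by rewrite /= eq_sym ne.
apply/(nfa_acceptsE x); exists (inord 1); last by rewrite inordK.
have one_end : (inord 1 : state) \in after x (size x).
  by apply: after_loop one_in => [s|]; rewrite ?jx ?leqnn //= inordK // eqxx !orbT.
by apply: in_next one_end _; rewrite /= inordK.
Qed.

Lemma period_nfa_rejects y : fourth_power n y -> nfa_rejects period_nfa y.
Proof.
move=> [w [wn ->]] /(nfa_acceptsE _) [q /in_nextP [q0 Hq0 /andP [/eqP q0_1 _]] _].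
set x := rep4 w in Hq0 *.
have inv l : l <= size x -> forall q : state, q \in after x l -> q = 0 :> nat \/
    exists2 i, i < l & q = mem_state ((l - i.+1) %% n) (nth false x i) :> nat.
  elim: l => [_ q'|l IH lx q'].
    rewrite /after take0 => /in_nextP [q1].
    by rewrite inE => /eqP -> /andP [_ /eqP]; left.
  rewrite afterS // => /in_nextP [q1 Hq1].
  case: (IH (ltnW lx) q1 Hq1) => [-> /=|[i il ->]]; rewrite ?period_step_mem.
    by case/orP => /eqP ->; [left | right; exists l; rewrite ?subnn ?mod0n].
  case/orP => [/eqP ->|/and3P [wrap ne _]].
    by right; exists i; [exact: ltnW | rewrite modn_succ -subSn].
  rewrite modn_succ -subSn // subSS in wrap.
  have x_l : l < 4 * size w by rewrite -size_rep4.
  rewrite (@nth_rep4_mod w l i x_l) ?eqxx // in ne; first lia.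
  by apply/eqP; rewrite wn eqn_mod_dvd // ltnW.
case: (inv _ (leqnn _) q0 Hq0) => [|[i _]]; rewrite q0_1 //.
Qed.

End PeriodNFA.

Lemma period_promise_in_1N : in_1N period_promise.
Proof.
exists 2, period_nfa => n; split; first by rewrite /=; nia.
by split; [exact: period_nfa_accepts | exact: period_nfa_rejects].
Qed.

Lemma sq_le_exp2 j : 4 <= j -> j * j <= 2 ^ j.
Proof.
elim: j => // j IH; rewrite leq_eqVlt => /orP [/eqP <- //|j4].
by rewrite expnS; have := IH j4; nia.
Qed.

Lemma exp_beats_poly c :
  exists2 n, 0 < n & 2 * (4 * n + 3) ^ 2 * (c * n.+1 ^ c) ^ 6 < 2 ^ n.
Proof.
set j := 6 * c + 16; set X := 2 ^ j.
have jX : j < X := ltn_expl j (isT : 1 < 2).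
exists X.-1; first lia.
rewrite prednK ?expn_gt0 //.
have nX : 4 * X.-1 + 3 <= X ^ 2 by nia.
have cX : c * X ^ c <= X ^ c.+1 by rewrite expnS leq_mul2r; apply/orP; right; lia.
apply: (@leq_ltn_trans (2 * (X ^ 2) ^ 2 * (X ^ c.+1) ^ 6)).
  by rewrite leq_mul ?leq_mul2l ?leq_exp2r.
have -> : 2 * (X ^ 2) ^ 2 * (X ^ c.+1) ^ 6 = 2 ^ (j * (6 * c + 10)).+1.
  by rewrite /X -!expnM -mulnA -expnD -expnS; congr (2 ^ _.+1); lia.
have j4 : 4 <= j by rewrite /j addnC.
by rewrite ltn_exp2l //; have := sq_le_exp2 j4; rewrite -/X /j; lia.
Qed.

Lemma period_promise_not_in_1DPD : ~ in_1DPD period_promise.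
Proof.
case=> c [M HM]; have [n n_gt0 small] := exp_beats_poly c.
have [ssc_le [acc rej]] := HM n.
have := dpda_ssc_lower_bound n_gt0 acc rej; rewrite leqNgt => /negP; apply.
by apply: leq_ltn_trans small; rewrite leq_mul2l leq_exp2r // ssc_le orbT.
Qed.

Theorem proposition5p2 :
  exists (Sigma : finType) (L : nat -> promise Sigma),
    (forall n, promise_disjoint (L n)) /\ in_1N L /\ ~ in_1DPD L.
Proof.
exists bool, period_promise; split; first exact: period_promise_disjoint.
by split; [exact: period_promise_in_1N | exact: period_promise_not_in_1DPD].
Qed.
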